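(* Let $\Gamma$ be a group and $0\to\mathbb{Z}\to\widehat{\Gamma}\to\Gamma\to1$ a central extension. Let $\widehat{\phi}$ be an automorphism of $\widehat{\Gamma}$ with $\widehat{\phi}(\mathbb{Z})=\mathbb{Z}$, and let $\phi$ be the automorphism of $\Gamma$ induced by $\widehat{\phi}$. Then for every $<\ \in LO_{\mathbb{Z}}(\widehat{\Gamma})$, the order $<_{\widehat{\phi}}$ belongs to $LO_{\mathbb{Z}}(\widehat{\Gamma})$, and $\pi_{\widehat{\Gamma}}^*(<_{\widehat{\phi}}) = \big(\pi_{\widehat{\Gamma}}^*(<)\big)_{\phi}$. That is, $\pi_{\widehat{\Gamma}}^*\circ\widehat{\phi}^* = \phi^*\circ\pi_{\widehat{\Gamma}}^*$ on $LO_{\mathbb{Z}}(\widehat{\Gamma})$, where $\widehat{\phi}^*(<)=<_{\widehat{\phi}}$ and $\phi^*(c)=c_\phi$.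
   Context: A left order on a group is a total order invariant under left multiplication. For an automorphism $\psi$ and a left order $<$, $g_1<_\psi g_2$ iff $\psi(g_1)<\psi(g_2)$. For a circular order $c$ (a map $\Gamma^3\to\{0,\pm1\}$ vanishing on triples with repeated entries, satisfying the cocycle identity $c(g_2,g_3,g_4)-c(g_1,g_3,g_4)+c(g_1,g_2,g_4)-c(g_1,g_2,g_3)=0$ and left invariance), $c_\phi(g_1,g_2,g_3)=c(\phi(g_1),\phi(g_2),\phi(g_3))$. A subgroup $\Lambda$ is cofinal for a left order $<$ on $\widehat{\Gamma}$ if for every $g\in\widehat{\Gamma}$ there exist $\lambda_1,\lambda_2\in\Lambda$ with $\lambda_1<g<\lambda_2$; $LO_{\mathbb{Z}}(\widehat{\Gamma})$ is the set of left orders on $\widehat{\Gamma}$ for which the central subgroup $\mathbb{Z}$ is cofinal. The map $\pi_{\widehat{\Gamma}}^*\colon LO_{\mathbb{Z}}(\widehat{\Gamma})\to CO(\Gamma)$ is defined as follows: given $<$, let $z$ be the generator of $\mathbb{Z}$ with $1<z$; for $\gamma\in\Gamma$ let $\widehat{\gamma}$ be the unique lift of $\gamma$ with $1\le\widehat{\gamma}<z$; for distinct $\gamma_1,\gamma_2,\gamma_3\in\Gamma$ let $\sigma$ be the permutation with $\widehat{\gamma}_{\sigma(1)}<\widehat{\gamma}_{\sigma(2)}<\widehat{\gamma}_{\sigma(3)}$ and set $\pi_{\widehat{\Gamma}}^*(<)(\gamma_1,\gamma_2,\gamma_3)=\mathrm{sign}(\sigma)$; on triples with repeated entries the value is $0$.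 *)

From HB Require Import structures.
From mathcomp Require Import all_boot all_order all_algebra.
From Stdlib Require Import ClassicalEpsilon.
Set Implicit Arguments. Unset Strict Implicit. Unset Printing Implicit Defensive.

Local Open Scope group_scope.

Section Defs.
Variables (G : groupType).

Definition is_hom (H : groupType) (f : G -> H) : Prop :=
  forall x y : G, f (x * y) = f x * f y.

Definition is_aut (f : G -> G) : Prop := is_hom f /\ bijective f.

Definition is_left_order (lt : G -> G -> Prop) : Prop :=
  [/\ (forall x, ~ lt x x),
      (forall x y w, lt x y -> lt y w -> lt x w),
      (forall x y, x <> y -> lt x y \/ lt y x) &
      (forall g x y, lt x y -> lt (g * x) (g * y))].

Definition order_pullback (psi : G -> G) (lt : G -> G -> Prop) : G -> G -> Prop :=
  fun g1 g2 => lt (psi g1) (psi g2).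

Definition cofinal (L : G -> Prop) (lt : G -> G -> Prop) : Prop :=
  forall g, exists l1 l2, L l1 /\ L l2 /\ lt l1 g /\ lt g l2.

End Defs.

Definition Zsub (Gh : groupType) (i : int -> Gh) : Gh -> Prop :=
  fun g => exists n : int, g = i n.

Definition LO_Z (Gh : groupType) (i : int -> Gh) (lt : Gh -> Gh -> Prop) : Prop :=
  is_left_order lt /\ cofinal (Zsub i) lt.

Definition central_extension (Gh Ga : groupType) (i : int -> Gh) (p : Gh -> Ga)
  : Prop :=
  [/\ (forall m n : int, i (m + n)%R = i m * i n) /\ injective i,
      (forall (n : int) (g : Gh), i n * g = g * i n),
      is_hom p,
      (forall y : Ga, exists g, p g = y) &
      (forall g : Gh, p g = 1 <-> exists n, g = i n)].

Definition circ_pullback (Ga : groupType) (phi : Ga -> Ga) (c : Ga -> Ga -> Ga -> int)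
  : Ga -> Ga -> Ga -> int :=
  fun g1 g2 g3 => c (phi g1) (phi g2) (phi g3).

Section PiStar.
Variables (Gh Ga : groupType) (i : int -> Gh) (p : Gh -> Ga) (lt : Gh -> Gh -> Prop).

Definition zgen : Gh :=
  epsilon (inhabits 1) (fun z => (z = i 1%R \/ z = i (-1)%R) /\ lt 1 z).

Definition hat_lift (gam : Ga) : Gh :=
  epsilon (inhabits 1)
    (fun g => p g = gam /\ (g = 1 \/ lt 1 g) /\ lt g zgen).

(* sign of the permutation sigma with a_sigma(1) < a_sigma(2) < a_sigma(3):
   +1 for the even permutations (id and the two 3-cycles), -1 otherwise *)
Definition sort_sign (a1 a2 a3 : Gh) : int :=
  if excluded_middle_informative
       ((lt a1 a2 /\ lt a2 a3) \/ (lt a2 a3 /\ lt a3 a1) \/ (lt a3 a1 /\ lt a1 a2))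
  then 1%R else (-1)%R.

Definition pi_star : Ga -> Ga -> Ga -> int :=
  fun g1 g2 g3 =>
    if [&& g1 != g2, g2 != g3 & g1 != g3]
    then sort_sign (hat_lift g1) (hat_lift g2) (hat_lift g3)
    else 0%R.

End PiStar.

From mathcomp Require Import all_boot all_order all_algebra zify.
From Stdlib Require Import ClassicalEpsilon FunctionalExtensionality.
Set Implicit Arguments. Unset Strict Implicit. Unset Printing Implicit Defensive.
Import GRing.Theory Num.Theory.
Local Open Scope ring_scope.
Local Open Scope group_scope.

(* The automorphism phihat is an order isomorphism from (Ghat, <_phihat) onto
   (Ghat, <).  It maps Z onto Z, hence acts on Z by +1 or -1, so it sends the
   positive generator z' of Z for <_phihat to the positive generator z for <,
   and the fundamental domain [1, z') of <_phihat onto the fundamental domain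
   [1, z) of <.  As phihat covers phi, it therefore maps the canonical lift of
   gamma for <_phihat to the canonical lift of phi gamma for <, and pi^* only
   compares canonical lifts in the left order. *)

Lemma int_mul_eq1 (m n : int) : (m * n = 1)%R -> n = 1%R \/ n = (-1)%R.
Proof. by move/intUnitRing.unitzPl; rewrite unfold_in => /orP[] /eqP; [left|right]. Qed.

Section Homomorphism.
Variables (G H : groupType) (f : G -> H).
Hypothesis fM : is_hom f.

Lemma hom1 : f 1 = 1.
Proof. by apply: (@mulgI _ (f 1)); rewrite -fM !mulg1. Qed.

Lemma homV x : f x^-1 = (f x)^-1.
Proof. by apply/esym/mulg1_eq; rewrite -fM mulgV hom1. Qed.

End Homomorphism.

Definition is_int_hom (G : groupType) (f : int -> G) : Prop :=
  forall m n : int, f (m + n)%R = f m * f n.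

Section IntHomomorphism.
Variables (G : groupType) (f : int -> G).
Hypothesis fZ : is_int_hom f.

Lemma int_hom0 : f 0%R = 1.
Proof. by apply: (@mulgI _ (f 0%R)); rewrite -fZ addr0 mulg1. Qed.

Lemma int_homN n : f (- n)%R = (f n)^-1.
Proof. by apply/esym/mulg1_eq; rewrite -fZ subrr int_hom0. Qed.

Lemma int_hom_scale a : is_int_hom (fun n => f (n * a)%R).
Proof. by move=> m n; rewrite mulrDl fZ. Qed.

End IntHomomorphism.

Lemma eq_int_hom (G : groupType) (f g : int -> G) :
  is_int_hom f -> is_int_hom g -> f 1%R = g 1%R -> forall n, f n = g n.
Proof.
move=> fZ gZ fg1; have fg_nat (n : nat) : f n%:Z = g n%:Z.
  elim: n => [|n IH]; first by rewrite !int_hom0.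
  by rewrite intS fZ gZ fg1 IH.
by case=> n; rewrite ?NegzE ?int_homN // fg_nat.
Qed.

(* Stated with [y = x] so that [le_of lt 1 g] is literally the condition
   used in [hat_lift]. *)
Definition le_of (T : Type) (lt : T -> T -> Prop) (x y : T) : Prop :=
  y = x \/ lt x y.

Section LeftOrder.
Variables (G : groupType) (lt : G -> G -> Prop).
Hypothesis ltG : is_left_order lt.
Local Notation le := (le_of lt).

Lemma ltxx x : ~ lt x x.
Proof. by case: ltG => lt_irr _ _ _; apply: lt_irr. Qed.

Lemma lt_trans y x z : lt x y -> lt y z -> lt x z.
Proof. by case: ltG => _ lt_tr _ _; apply: lt_tr. Qed.

Lemma lt_total x y : x <> y -> lt x y \/ lt y x.
Proof. by case: ltG => _ _ lt_tot _; apply: lt_tot. Qed.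

Lemma ltM2l g x y : lt (g * x) (g * y) <-> lt x y.
Proof.
case: ltG => _ _ _ ltM; split; last exact: ltM.
by move/(ltM g^-1); rewrite !mulKg.
Qed.

Lemma le_or_gt x y : le x y \/ lt y x.
Proof.
have [->|/lt_total[]] := classic (y = x); by [left; left | left; right | right].
Qed.

Lemma le_lt_trans y x z : le x y -> lt y z -> lt x z.
Proof. by case=> [->|/lt_trans] //; apply. Qed.

Lemma leM2l g x y : le x y -> le (g * x) (g * y).
Proof. by case=> [->|lt_xy]; [left | right; apply/ltM2l]. Qed.

Section PositiveGenerator.
Variable e : int -> G.
Hypotheses (eZ : is_int_hom e) (e1_gt1 : lt 1 (e 1%R)).

Lemma int_hom_gt1 (k : nat) : lt 1 (e k.+1%:Z).
Proof.
elim: k => [|k IH] //; rewrite intS eZ; apply: lt_trans e1_gt1 _.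
by rewrite -[X in lt X _]mulg1; apply/ltM2l.
Qed.

Lemma lt_int_hom m n : (m < n)%R -> lt (e m) (e n).
Proof.
move=> mn; have -> : n = (m + (`|n - m|%N.-1).+1%:Z)%R by lia.
by rewrite eZ -[X in lt X _]mulg1; apply/ltM2l/int_hom_gt1.
Qed.

Lemma lt_int_homE m n : lt (e m) (e n) <-> (m < n)%R.
Proof.
split=> [lt_mn|]; last exact: lt_int_hom.
have [//|nm|mn] := ltrgtP m n; last by move: lt_mn; rewrite mn => /ltxx.
by case: (ltxx (lt_trans lt_mn (lt_int_hom nm))).
Qed.

Hypothesis eZcof : cofinal (Zsub e) lt.

Lemma int_hom_floor g : exists n, le (e n) g /\ lt g (e (n + 1)%R).
Proof.
have [_ [_ [[m ->] [[M ->] [mg gM]]]]] := eZcof g.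
have mM : (m < M)%R by apply/lt_int_homE/(lt_trans mg gM).
suff /(_ `|M - m|%N) : forall k : nat,
    lt g (e (m + k%:Z)%R) -> exists n, le (e n) g /\ lt g (e (n + 1)%R).
  by rewrite (_ : (m + _)%R = M); [apply | lia].
elim=> [|k IH]; first by rewrite addr0 => /(lt_trans mg) /ltxx.
have [kg g_lt|gk _] := le_or_gt (e (m + k%:Z)%R) g; last exact: IH.
by exists (m + k%:Z)%R; split=> //; rewrite -addrA (addrC _ 1%R) -intS.
Qed.

Variables (H : groupType) (p : G -> H).
Hypotheses (pM : is_hom p) (pker : forall g, p g = 1 <-> Zsub e g).

Lemma exists_lift g : exists h, p h = p g /\ le 1 h /\ lt h (e 1%R).
Proof.
have [n [ng gn]] := int_hom_floor g.
exists (e (- n)%R * g); split; [|split].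
- have /pker pe : Zsub e (e (- n)%R) by exists (- n)%R.
  by rewrite pM pe mul1g.
- by move: (leM2l (e (- n)%R) ng); rewrite -eZ addNr int_hom0.
- by rewrite -(addKr n 1%R) eZ; apply/ltM2l.
Qed.

Lemma lift_shift_le0 h h' k : h = e k * h' -> le 1 h' -> lt h (e 1%R) -> (k <= 0)%R.
Proof.
move=> -> h'_ge1 /(le_lt_trans (leM2l (e k) h'_ge1)).
by rewrite mulg1 => /lt_int_homE; lia.
Qed.

Lemma lift_unique h h' : p h = p h' ->
  le 1 h -> lt h (e 1%R) -> le 1 h' -> lt h' (e 1%R) -> h = h'.
Proof.
move=> phh' h_ge1 h_lt h'_ge1 h'_lt.
have [k hk] : Zsub e (h * h'^-1) by apply/pker; rewrite pM (homV pM) phh' mulgV.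
have Eh : h = e k * h' by rewrite -hk mulgVK.
have Eh' : h' = e (- k)%R * h by rewrite Eh mulgA -eZ addNr int_hom0 // mul1g.
have k0 : k = 0%R.
  by have := lift_shift_le0 Eh h'_ge1 h_lt; have := lift_shift_le0 Eh' h_ge1 h'_lt; lia.
by rewrite Eh k0 int_hom0 // mul1g.
Qed.

End PositiveGenerator.
End LeftOrder.

Section CanonicalLift.
Variables (G H : groupType) (i : int -> G) (p : G -> H) (lt : G -> G -> Prop).
Hypotheses (iZ : is_int_hom i) (i_inj : injective i) (ltZ : LO_Z i lt).
Let ltG : is_left_order lt := proj1 ltZ.

Lemma zgenP : (zgen i lt = i 1%R \/ zgen i lt = i (-1)%R) /\ lt 1 (zgen i lt).
Proof.
apply: (epsilon_spec (inhabits 1) (fun z => (z = i 1%R \/ z = i (-1)%R) /\ lt 1 z)).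
have i1_neq1 : i 1%R <> 1 by rewrite -(int_hom0 iZ) => /i_inj.
have [i1_lt1|] := lt_total ltG i1_neq1; last by exists (i 1%R); split; first left.
exists (i (-1)%R); split; first by right.
by apply/(ltM2l ltG (i 1%R)); rewrite mulg1 -iZ addrN int_hom0.
Qed.

Lemma zgen_unique z : z = i 1%R \/ z = i (-1)%R -> lt 1 z -> zgen i lt = z.
Proof.
have not_both : ~ (lt 1 (i 1%R) /\ lt 1 (i (-1)%R)).
  case=> /(ltM2l ltG (i (-1)%R)); rewrite mulg1 -iZ addNr int_hom0 // => lt_1.
  by move/(lt_trans ltG lt_1)/(ltxx ltG).
have [[->|->] zgen_gt1] := zgenP; case=> -> z_gt1 //; by case: not_both.
Qed.

Lemma zgen_int_hom : exists e : int -> G, [/\ is_int_hom e, e 1%R = zgen i lt,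
  lt 1 (e 1%R), cofinal (Zsub e) lt & forall g, Zsub e g <-> Zsub i g].
Proof.
have [[zgenE|zgenE] zgen_gt1] := zgenP.
  by exists i; split=> //; [rewrite zgenE in zgen_gt1 | case: ltZ].
rewrite zgenE in zgen_gt1.
have eZi g : Zsub (fun n => i (- n)%R) g <-> Zsub i g.
  by split=> -[n ->]; exists (- n)%R; rewrite ?opprK.
exists (fun n => i (- n)%R); split=> //.
- by move=> m n; rewrite opprD iZ.
- by move=> g; have [l1 [l2 [/eZi Zl1 [/eZi Zl2 lts]]]] := proj2 ltZ g; exists l1, l2.
Qed.

Hypotheses (pM : is_hom p) (pker : forall g, p g = 1 <-> Zsub i g).
Local Notation hat := (hat_lift i p lt).

Lemma hat_liftP g :
  p (hat (p g)) = p g /\ le_of lt 1 (hat (p g)) /\ lt (hat (p g)) (zgen i lt).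
Proof.
have [e [eZ e1 e1_gt1 eZcof eZi]] := zgen_int_hom.
have pkerE h : p h = 1 <-> Zsub e h by split=> [/pker/eZi | /eZi/pker].
apply: (epsilon_spec (inhabits 1)
  (fun h => p h = p g /\ le_of lt 1 h /\ lt h (zgen i lt))).
by rewrite -e1; apply: (exists_lift ltG eZ e1_gt1 eZcof pM pkerE).
Qed.

Lemma hat_lift_unique h : le_of lt 1 h -> lt h (zgen i lt) -> hat (p h) = h.
Proof.
have [e [eZ e1 e1_gt1 _ eZi]] := zgen_int_hom.
have pkerE g : p g = 1 <-> Zsub e g by split=> [/pker/eZi | /eZi/pker].
have [phat [hat_ge1 hat_lt]] := hat_liftP h.
rewrite -e1 in hat_lt * => h_ge1 h_lt.
exact: (lift_unique ltG eZ e1_gt1 pM pkerE phat).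
Qed.

End CanonicalLift.

Section Pullback.
Variables (G : groupType) (psi : G -> G) (lt : G -> G -> Prop).

Lemma left_order_pullback :
  is_hom psi -> injective psi -> is_left_order lt -> is_left_order (order_pullback psi lt).
Proof.
move=> psiM psi_inj [lt_irr lt_tr lt_tot ltM]; split.
- by move=> x; apply: lt_irr.
- by move=> x y z; apply: lt_tr.
- by move=> x y /(contra_not (@psi_inj x y)) /lt_tot.
- by move=> g x y; rewrite /order_pullback !psiM; apply: ltM.
Qed.

Lemma cofinal_pullback (L : G -> Prop) : (forall g, L g -> exists h, L h /\ psi h = g) ->
  cofinal L lt -> cofinal L (order_pullback psi lt).
Proof.
move=> psiL cofL g; have [l1 [l2 [/psiL[h1 [Lh1 <-]] [/psiL[h2 [Lh2 <-]] lts]]]] := cofL (psi g).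
by exists h1, h2.
Qed.

Lemma sort_sign_pullback a1 a2 a3 :
  sort_sign (order_pullback psi lt) a1 a2 a3 = sort_sign lt (psi a1) (psi a2) (psi a3).
Proof. by []. Qed.

End Pullback.

Section CenterPreservingAutomorphism.
Variables (G : groupType) (i : int -> G) (phihat : G -> G).
Hypotheses (iZ : is_int_hom i) (i_inj : injective i).
Hypotheses (phihatM : is_hom phihat) (phihat_inj : injective phihat).
Hypotheses (phihatZ : forall g, Zsub i g -> Zsub i (phihat g))
  (phihatZ_onto : forall g, Zsub i g -> exists h, Zsub i h /\ phihat h = g).

Lemma LO_Z_pullback lt : LO_Z i lt -> LO_Z i (order_pullback phihat lt).
Proof.
by case=> ltG cofZ; split; [exact: left_order_pullback | exact: cofinal_pullback].
Qed.

Lemma center_aut_sign :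
  (forall k, phihat (i k) = i k) \/ (forall k, phihat (i k) = i (- k)%R).
Proof.
have [n phihat_i1] : Zsub i (phihat (i 1%R)) by apply: phihatZ; exists 1%R.
have phihat_iE : forall k, phihat (i k) = i (k * n)%R.
  apply: (eq_int_hom (f := phihat \o i) _ (int_hom_scale iZ n)); last by rewrite mul1r.
  by move=> k1 k2; rewrite /= iZ phihatM.
have [_ [[m ->] /esym]] := phihatZ_onto (ex_intro _ 1%R erefl).
rewrite phihat_iE => /i_inj /esym /int_mul_eq1 [] n1; [left | right] => k;
  by rewrite phihat_iE n1 ?mulr1 ?mulrN1.
Qed.

Lemma zgen_pullback lt : LO_Z i lt -> phihat (zgen i (order_pullback phihat lt)) = zgen i lt.
Proof.
move=> ltZ; have [zgen_gen zgen_gt1] := zgenP iZ i_inj (LO_Z_pullback ltZ).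
apply/esym/(zgen_unique iZ i_inj ltZ); last by rewrite -(hom1 phihatM).
by case: center_aut_sign => phihatE; case: zgen_gen => ->; rewrite phihatE ?opprK;
  [left | right | right | left].
Qed.

Variables (H : groupType) (p : G -> H) (phi : H -> H).
Hypotheses (pM : is_hom p) (p_onto : forall y, exists g, p g = y)
  (pker : forall g, p g = 1 <-> Zsub i g) (phihat_over : forall g, p (phihat g) = phi (p g)).

Lemma hat_lift_pullback lt gam : LO_Z i lt ->
  phihat (hat_lift i p (order_pullback phihat lt) gam) = hat_lift i p lt (phi gam).
Proof.
move=> ltZ; have ltZ' := LO_Z_pullback ltZ.
have [g <-] := p_onto gam.
have [phat [hat_ge1 hat_lt]] := hat_liftP iZ i_inj ltZ' pM pker g.
set h' := hat_lift _ _ _ (p g) in phat hat_ge1 hat_lt *.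
rewrite -[p g in RHS]phat -phihat_over; symmetry.
apply: (hat_lift_unique iZ i_inj ltZ pM pker); last by rewrite -(zgen_pullback ltZ).
by case: hat_ge1 => [->|]; [left; rewrite hom1 | right; rewrite -(hom1 phihatM)].
Qed.

Lemma induced_aut_inj : injective phi.
Proof.
move=> x y; have [[gx <-] [gy <-]] := (p_onto x, p_onto y).
rewrite -!phihat_over => pxy.
have [k phihat_gxy] : Zsub i (phihat (gx / gy)).
  by apply/pker; rewrite phihatM (homV phihatM) pM (homV pM) pxy mulgV.
have [_ [[m ->] phihat_im]] := phihatZ_onto (ex_intro _ k erefl).
have /pker : Zsub i (gx / gy) by exists m; apply: phihat_inj; rewrite phihat_im phihat_gxy.
by rewrite pM (homV pM) => /divg1_eq.
Qed.

Lemma pi_star_pullback lt : LO_Z i lt ->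
  pi_star i p (order_pullback phihat lt) = circ_pullback phi (pi_star i p lt).
Proof.
move=> ltZ; apply: functional_extensionality => g1.
apply: functional_extensionality => g2; apply: functional_extensionality => g3.
rewrite /circ_pullback /pi_star !(inj_eq induced_aut_inj); case: ifP => // _.
by rewrite sort_sign_pullback !hat_lift_pullback.
Qed.

End CenterPreservingAutomorphism.

Theorem lemma4p3 (Gh Ga : groupType) (i : int -> Gh) (p : Gh -> Ga)
  (phihat : Gh -> Gh) (phi : Ga -> Ga) :
  central_extension i p ->
  is_aut phihat ->
  (* phihat(Z) = Z *)
  (forall g, Zsub i g -> Zsub i (phihat g)) ->
  (forall g, Zsub i g -> exists h, Zsub i h /\ phihat h = g) ->
  (* phi is the automorphism of Gamma induced by phihat *)
  (forall g : Gh, p (phihat g) = phi (p g)) ->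
  forall lt : Gh -> Gh -> Prop, LO_Z i lt ->
    LO_Z i (order_pullback phihat lt) /\
    pi_star i p (order_pullback phihat lt) = circ_pullback phi (pi_star i p lt).
Proof.
move=> [[iZ i_inj] _ pM p_onto pker] [phihatM /bij_inj phihat_inj] phihatZ phihatZ_onto
  phihat_over lt ltZ.
split; first exact: LO_Z_pullback.
exact: (pi_star_pullback iZ i_inj phihatM phihat_inj phihatZ phihatZ_onto
  pM p_onto pker phihat_over).
Qed.
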